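(* For $n>2$, there is no non-trivial antisymmetric real bilinear map $b:\mathbb{C}^{n+1}\times\mathbb{C}^{n+1}\to\mathbb{C}^{n+1}$ that is equivariant under ${\sf SO}(1,n)$, i.e. satisfies $b(Au,Av)=Ab(u,v)$ for all $A\in{\sf SO}(1,n)$.
   Context: ${\sf SO}(1,n)$ is the special orthogonal group of the Lorentz form $-x_0^2+x_1^2+\dots+x_n^2$ on $\mathbb{R}^{n+1}$, acting on $\mathbb{C}^{n+1}=\mathbb{R}^{n+1}+i\mathbb{R}^{n+1}$ diagonally by $A(x+iy)=Ax+iAy$. *)

From HB Require Import structures.
From mathcomp Require Import all_boot all_order all_algebra.
From mathcomp Require Import complex.
From mathcomp Require Import reals.
Set Implicit Arguments. Unset Strict Implicit. Unset Printing Implicit Defensive.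
Import Order.TTheory GRing.Theory Num.Theory.
Local Open Scope ring_scope.
Local Open Scope complex_scope.

Definition lorentzJ (R : realType) (n : nat) : 'M[R]_(n.+1) :=
  \matrix_(i, j) (if i == j then (if i == ord0 then -1 else 1) else 0).

Definition in_SO1n (R : realType) (n : nat) (A : 'M[R]_(n.+1)) : Prop :=
  A^T *m lorentzJ R n *m A = lorentzJ R n /\ \det A = 1.

(* diagonal action on C^{n+1} = R^{n+1} + i R^{n+1}: A(x+iy) = Ax + iAy *)
Definition cact (R : realType) (n : nat) (A : 'M[R]_(n.+1))
  (u : 'cV[R[i]]_(n.+1)) : 'cV[R[i]]_(n.+1) :=
  map_mx (fun x : R => x%:C) A *m u.

Definition real_bilinear (R : realType) (n : nat)
  (b : 'cV[R[i]]_(n.+1) -> 'cV[R[i]]_(n.+1) -> 'cV[R[i]]_(n.+1)) : Prop :=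
  (forall (r : R) u1 u2 v, b (r%:C *: u1 + u2) v = r%:C *: b u1 v + b u2 v) /\
  (forall (r : R) u v1 v2, b u (r%:C *: v1 + v2) = r%:C *: b u v1 + b u v2).

Definition antisym_map (R : realType) (n : nat)
  (b : 'cV[R[i]]_(n.+1) -> 'cV[R[i]]_(n.+1) -> 'cV[R[i]]_(n.+1)) : Prop :=
  forall u v, b u v = - b v u.

(** The diagonal sign matrices with an even number of entries [-1] lie in
    SO(1,n), and such a matrix acts on each coordinate line of C^{n+1} by a
    real sign.  For vectors [u], [v] supported on the coordinates [j] and [k],
    equivariance gives [s_j s_k b(u,v)_m = s_m b(u,v)_m].  With at least four
    coordinates one can flip one of [j], [k], [m] together with a fourth
    coordinate so that [s_j s_k <> s_m]; hence [b(u,v) = 0] on coordinate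
    lines, and by real bilinearity everywhere. *)
From HB Require Import structures.
From mathcomp Require Import all_boot all_order all_algebra.
From mathcomp Require Import complex.
From mathcomp Require Import reals.
From mathcomp Require Import zify.
Import GRing.Theory Num.Theory.
Local Open Scope ring_scope.
Set Implicit Arguments. Unset Strict Implicit.

Section SignMatrices.
Variables (R : realType) (n : nat).
Local Open Scope complex_scope.

Definition sign_flip (S : {set 'I_n.+1}) (i : 'I_n.+1) : R :=
  if i \in S then -1 else 1.

Definition sign_mx (S : {set 'I_n.+1}) : 'M[R]_n.+1 :=
  diag_mx (\row_i sign_flip S i).

Lemma sign_flip_sqr S i : sign_flip S i * sign_flip S i = 1.
Proof. by rewrite /sign_flip; case: ifP; rewrite ?mulrNN mulr1. Qed.

Lemma lorentzJ_diag :
  lorentzJ R n = diag_mx (\row_i (if i == ord0 then -1 else 1)).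
Proof.
apply/matrixP=> i j; rewrite !mxE.
by case: (eqVneq i j) => [->|ij]; rewrite ?eqxx ?(negbTE ij) ?mulr1n ?mulr0n.
Qed.

Lemma det_sign_mx (S : {set 'I_n.+1}) : \det (sign_mx S) = (-1) ^+ #|S|.
Proof.
rewrite det_diag -prodr_const [RHS]big_mkcond /=.
by apply: eq_bigr => i _; rewrite mxE.
Qed.

Lemma sign_mx_SO1n (S : {set 'I_n.+1}) : ~~ odd #|S| -> in_SO1n (sign_mx S).
Proof.
move=> evenS; split; last by rewrite det_sign_mx -signr_odd (negbTE evenS).
rewrite tr_diag_mx lorentzJ_diag !mulmx_diag; congr diag_mx.
by apply/rowP=> i; rewrite !mxE mulrAC sign_flip_sqr mul1r.
Qed.

Definition coord_part (j : 'I_n.+1) (u : 'cV[R[i]]_n.+1) : 'cV[R[i]]_n.+1 :=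
  \col_i (if i == j then u i 0 else 0).

Lemma sum_coord_part u : \sum_j coord_part j u = u.
Proof.
apply/matrixP=> i l; rewrite (ord1 l) summxE (bigD1 i) //= big1 ?addr0.
  by rewrite mxE eqxx.
by move=> k ki; rewrite mxE eq_sym (negbTE ki).
Qed.

Lemma cact_sign_mxE S (w : 'cV[R[i]]_n.+1) m :
  cact (sign_mx S) w m 0 = (sign_flip S m)%:C * w m 0.
Proof. by rewrite /cact map_diag_mx mul_diag_mx !mxE. Qed.

Lemma cact_sign_mx_coord_part S j u :
  cact (sign_mx S) (coord_part j u) = (sign_flip S j)%:C *: coord_part j u.
Proof.
apply/matrixP=> i l; rewrite (ord1 l) cact_sign_mxE !mxE.
by case: eqP => [->|]; rewrite ?mulr0.
Qed.

Lemma exists_notin3 (j k m : 'I_n.+1) :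
  (2 < n)%N -> exists q, q \notin [set j; k; m].
Proof.
move=> n_gt2; suff /card_gt0P [q] : (0 < #|~: [set j; k; m]|)%N.
  by rewrite inE; exists q.
have card3 : (#|[set j; k; m]| <= 3)%N.
  apply: leq_trans (card_size [:: j; k; m]).
  by apply/subset_leq_card/subsetP => x; rewrite !inE -orbA.
by have := cardsC [set j; k; m]; rewrite card_ord; lia.
Qed.

Lemma exists_sign_mismatch (j k m : 'I_n.+1) : (2 < n)%N ->
  exists S : {set 'I_n.+1},
    ~~ odd #|S| /\ sign_flip S j * sign_flip S k != sign_flip S m.
Proof.
move=> n_gt2; have [q] := exists_notin3 j k m n_gt2.
rewrite !inE => /norP [/norP [qj qk] qm].
pose p := if j == k then m else if j == m then k else j.
have pq : p != q by rewrite /p eq_sym; case: ifP => _; last case: ifP.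
exists [set p; q]; rewrite cards2 pq; split=> //.
rewrite /sign_flip !inE ![_ == q]eq_sym (negbTE qj) (negbTE qk) (negbTE qm) !orbF.
have one_neqN1 : (1 : R) != -1 by rewrite -addr_eq0 (pnatr_eq0 R 2).
rewrite /p; case: (eqVneq j k) => [<-|jk]; case: (eqVneq j m) => [<-|jm];
  rewrite ?eqxx ?(negbTE jk) ?(negbTE jm) ?[k == j]eq_sym ?(negbTE jk)
    ?[m == j]eq_sym ?(negbTE jm) ?mulrNN ?mulr1 ?mul1r ?mulrN1 //.
all: by rewrite eq_sym.
Qed.

End SignMatrices.

Arguments sign_flip {R n} S i.
Arguments sign_mx {R n} S.
Arguments coord_part {R n} j u.

Section RealBilinear.
Variables (R : realType) (n : nat).
Variable b : 'cV[R[i]]_n.+1 -> 'cV[R[i]]_n.+1 -> 'cV[R[i]]_n.+1.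
Hypothesis b_bilinear : real_bilinear b.
Local Open Scope complex_scope.

Lemma bilinDl x y v : b (x + y) v = b x v + b y v.
Proof. by have := b_bilinear.1 1 x y v; rewrite !scale1r. Qed.

Lemma bilinDr u x y : b u (x + y) = b u x + b u y.
Proof. by have := b_bilinear.2 1 u x y; rewrite !scale1r. Qed.

Lemma bilin0l v : b 0 v = 0.
Proof. by apply: (addrI (b 0 v)); rewrite -bilinDl !addr0. Qed.

Lemma bilin0r u : b u 0 = 0.
Proof. by apply: (addrI (b u 0)); rewrite -bilinDr !addr0. Qed.

Lemma bilinZl (r : R) x v : b (r%:C *: x) v = r%:C *: b x v.
Proof. by have := b_bilinear.1 r x 0 v; rewrite !addr0 bilin0l addr0. Qed.

Lemma bilinZr (r : R) u x : b u (r%:C *: x) = r%:C *: b u x.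
Proof. by have := b_bilinear.2 r u x 0; rewrite !addr0 bilin0r addr0. Qed.

Lemma bilin_coord_part_eq0 (S : {set 'I_n.+1}) j k m u v :
  (forall u v, b (cact (sign_mx S) u) (cact (sign_mx S) v) =
               cact (sign_mx S) (b u v)) ->
  sign_flip S j * sign_flip S k != sign_flip S m :> R ->
  b (coord_part j u) (coord_part k v) m 0 = 0.
Proof.
move=> /(_ (coord_part j u) (coord_part k v)) equiv neq.
move: equiv; rewrite !cact_sign_mx_coord_part bilinZl bilinZr scalerA.
move=> /(congr1 (fun w : 'cV_n.+1 => w m 0)).
rewrite cact_sign_mxE mxE -rmorphM => /eqP.
rewrite -subr_eq0 -mulrBl -rmorphB mulf_eq0 fmorph_eq0 subr_eq0 (negbTE neq).
by move/eqP.
Qed.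

Lemma bilin_eq0_of_coord_parts :
  (forall j k u v, b (coord_part j u) (coord_part k v) = 0) ->
  forall u v, b u v = 0.
Proof.
move=> coord_eq0 u v.
rewrite -(sum_coord_part u).
rewrite (big_morph (b^~ v) (fun x y => bilinDl x y v) (bilin0l v)) big1 // => j _.
rewrite -(sum_coord_part v) (big_morph _ (bilinDr _) (bilin0r _)).
by rewrite big1.
Qed.

End RealBilinear.

Theorem fact2p3 (R : realType) (n : nat) (hn : (2 < n)%N)
  (b : 'cV[R[i]]_(n.+1) -> 'cV[R[i]]_(n.+1) -> 'cV[R[i]]_(n.+1)) :
  real_bilinear b -> antisym_map b ->
  (forall A : 'M[R]_(n.+1), in_SO1n A ->
     forall u v, b (cact A u) (cact A v) = cact A (b u v)) ->
  forall u v, b u v = 0.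
Proof.
move=> bil _ equiv; apply: (bilin_eq0_of_coord_parts bil) => j k u v.
apply/matrixP=> m l; rewrite (ord1 l) mxE.
have [S [evenS mismatch]] := exists_sign_mismatch R j k m hn.
apply: (bilin_coord_part_eq0 bil) mismatch.
exact: equiv (sign_mx_SO1n R evenS).
Qed.
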